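(* Fix $\lambda>0$, $\epsilon>0$, $L_{\max}>0$, a decoding error probability $\delta\in(0,0.5)$ and a channel gain $|h_{ab}|^2>0$. Let $X$ be an exponential random variable with mean $1/\lambda$ and, for $P_a>0$, note that $$\mathbb{E}\left[\ln(XP_a+1)-\frac{XP_a}{XP_a+1}\right]=f(P_a):=-\left[1+\left(1+\frac{\lambda}{P_a}\right)e^{\lambda/P_a}\,\mathrm{Ei}\left(-\frac{\lambda}{P_a}\right)\right].$$ For $L_1>0$ and $P_a>0$ let $$R(L_1,P_a)=\log_2\left(1+P_a|h_{ab}|^2\right)-\sqrt{\frac{1}{L_1}\left(1-\frac{1}{(1+P_a|h_{ab}|^2)^2}\right)}\,\frac{Q^{-1}(\delta)}{\ln 2}.$$ Consider maximizing $L_1 R(L_1,P_a)(1-\delta)$ over $L_1$ and $P_a$ subject to $L_1 f(P_a)\le 2\epsilon^2$ and $L_1\le L_{\max}$. Then, for a given $P_a$, the optimal number of channel uses is $$L_1^*=\min\left(L_{\max},\frac{2\epsilon^2}{f(P_a)}\right),$$ and the optimal transmit power is a solution of maximizing $L_1^* R(L_1^*,P_a)(1-\delta)$ over $P_a>0$.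
   Context: $\mathrm{Ei}(x)=-\int_{-x}^{\infty}\frac{e^{-t}}{t}\,dt$ is the exponential integral. $Q^{-1}$ is the inverse of the Gaussian Q-function. This is the single-antenna-adversary case ($M=1$): $L_1\left(\ln(XP_a+1)-\frac{XP_a}{XP_a+1}\right)$ is the Kullback–Leibler divergence between $L_1$ i.i.d. observations $\mathcal{CN}(0,1)$ and $\mathcal{CN}(0,P_aX+1)$ given channel gain $X$; $L_1$ is treated as a continuous variable.
   Formalization: Both the optimality of $L_1^*$ for a given $P_a$ and the joint optimality of a power maximizing $L_1^* R(L_1^*,P_a)(1-\delta)$ hold under the extra hypothesis $R(L_1^*,P_a)\ge 0$ at that power. Apart from conventions, each condition added here is assumed in the paper as well or is needed for the statement above to hold. *)

From Stdlib Require Import Reals.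
From Coquelicot Require Import Coquelicot.
Open Scope R_scope.

(* Exponential integral Ei(x) = - \int_{-x}^{\infty} e^{-t}/t dt
   (used only at negative arguments, where this improper integral converges). *)
Definition Ei (x : R) : R :=
  - RInt_gen (fun t => exp (- t) / t) (at_point (- x)) (Rbar_locally p_infty).

Definition Qfun (x : R) : R :=
  RInt_gen (fun t => exp (- t ^ 2 / 2) / sqrt (2 * PI))
           (at_point x) (Rbar_locally p_infty).

Definition log2 (x : R) : R := ln x / ln 2.

Definition fKL (lam Pa : R) : R :=
  - (1 + (1 + lam / Pa) * exp (lam / Pa) * Ei (- (lam / Pa))).

(* R(L1,Pa), with q = Q^{-1}(delta) and h2 = |h_ab|^2 *)
Definition rate (h2 q L1 Pa : R) : R :=
  log2 (1 + Pa * h2)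
  - sqrt (/ L1 * (1 - / (1 + Pa * h2) ^ 2)) * q / ln 2.

Definition objective (h2 q delta L1 Pa : R) : R :=
  L1 * rate h2 q L1 Pa * (1 - delta).

Definition feasible (lam eps Lmax L1 Pa : R) : Prop :=
  0 < L1 /\ 0 < Pa /\ L1 * fKL lam Pa <= 2 * eps ^ 2 /\ L1 <= Lmax.

Definition L1opt (lam eps Lmax Pa : R) : R :=
  Rmin Lmax (2 * eps ^ 2 / fKL lam Pa).

(* Integrating by parts against the density lam e^{-lam x}, the kernel
   ln(xP+1) - xP/(xP+1) leaves the term (lam+P) e^{-lam x}/(xP+1); the
   substitution t = lam/P + lam x turns it into (1 + lam/P) e^{lam/P} e^{-t}/t,
   whose tail integral is -Ei(-lam/P).  This gives an explicit primitive with
   limit f(P) + 1 at infinity and value 1 at 0.  The integrand is positive, so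
   f(P) > 0 and the constraint L1 f(P) <= 2 eps^2 reads L1 <= 2 eps^2 / f(P).

   For fixed P, writing s = sqrt L1, the objective is (1 - delta)(a s^2 - k s)
   with a = log2(1 + P h2) >= 0, and the positive part of s(a s - k) is
   nondecreasing in s for every k.  Hence the largest feasible L1 is optimal as
   soon as its rate is nonnegative. *)

From Stdlib Require Import Reals Lra Psatz Classical.
From Coquelicot Require Import Coquelicot.
Open Scope R_scope.

Lemma is_lim_incr_bounded (G : R -> R) a M :
  (forall x y, a <= x -> x <= y -> G x <= G y) ->
  (forall x, a <= x -> G x <= M) ->
  exists l : R, is_lim G p_infty l.
Proof.
  intros G_incr G_bnd.
  set (E := fun z => exists x, a <= x /\ z = G x).
  assert (E_bnd : bound E) by (exists M; intros z [x [Hx ->]]; auto).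
  assert (E_ne : exists z, E z) by (exists (G a), a; split; [lra | auto]).
  destruct (completeness E E_bnd E_ne) as [l [l_ub l_lub]].
  exists l. apply filterlim_locally. intros eps.
  destruct (classic (exists x0, a <= x0 /\ l - eps < G x0)) as [[x0 [Hx0 Gx0]] | Hnone].
  - exists (Rmax a x0). intros x Hx.
    assert (a <= x /\ x0 <= x) as [Hax Hx0x]
      by (generalize (Rmax_l a x0) (Rmax_r a x0); lra).
    assert (G x0 <= G x) by (apply G_incr; lra).
    assert (G x <= l) by (apply l_ub; exists x; split; auto).
    change (Rabs (G x - l) < eps). apply Rabs_def1; lra.
  - assert (l <= l - eps); [| destruct eps; simpl in *; lra].
    apply l_lub. intros z [x [Hx ->]].
    apply Rnot_lt_le. intros Gx. apply Hnone. exists x; auto.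
Qed.

Lemma is_RInt_gen_p_infty_of_lim (f G : R -> R) a (l : R) :
  (forall b, a <= b -> is_RInt f a b (G b)) ->
  is_lim G p_infty l ->
  is_RInt_gen f (at_point a) (Rbar_locally p_infty) l.
Proof.
  intros f_int G_lim P HP.
  apply (Filter_prod _ _ _ (fun x => x = a) (fun b => a <= b /\ P (G b))).
  - reflexivity.
  - apply filter_and; [exists a; intros; lra | exact (G_lim P HP)].
  - intros x y -> [Hy PGy]. exists (G y); auto.
Qed.

Lemma is_lim_affine_p_infty c k : 0 < k -> is_lim (fun x => c + k * x) p_infty p_infty.
Proof.
  intros Hk P [M HM]. exists ((M - c) / k). intros x Hx. apply HM.
  assert ((M - c) / k * k = M - c) by (field; lra). nra.
Qed.

Lemma is_lim_exp_opp_mul k : 0 < k -> is_lim (fun x => exp (- k * x)) p_infty 0.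
Proof.
  intros Hk.
  apply (is_lim_ext (fun x => exp (- (0 + k * x)))); [intros; f_equal; ring |].
  apply (is_lim_comp exp _ p_infty 0 m_infty is_lim_exp_m).
  - exact (is_lim_opp _ _ _ (is_lim_affine_p_infty 0 k Hk)).
  - exists 0; intros; discriminate.
Qed.

Lemma is_lim_id_mul_exp_opp_mul k :
  0 < k -> is_lim (fun x => x * exp (- k * x)) p_infty 0.
Proof.
  intros Hk.
  apply (is_lim_ext (fun x => - / k * ((- (0 + k * x)) * exp (- (0 + k * x))))).
  { intros x. replace (- (0 + k * x)) with (- k * x) by ring. field. lra. }
  replace (Finite 0) with (Rbar_mult (- / k) 0) by (simpl; f_equal; ring).
  apply is_lim_scal_l.
  apply (is_lim_comp (fun y => y * exp y) _ p_infty 0 m_infty is_lim_mul_exp_m).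
  - exact (is_lim_opp _ _ _ (is_lim_affine_p_infty 0 k Hk)).
  - exists 0; intros; discriminate.
Qed.

Lemma ln_add1_le y : 0 <= y -> ln (y + 1) <= y.
Proof.
  intros Hy. rewrite <- (ln_exp y) at 2.
  apply ln_le; [lra | generalize (exp_ineq1_le y); lra].
Qed.

Lemma div_add1_lt_ln_add1 y : 0 < y -> y / (y + 1) < ln (y + 1).
Proof.
  intros Hy.
  assert (lt_exp : / (y + 1) < exp (- (y / (y + 1)))).
  { replace (/ (y + 1)) with (1 + - (y / (y + 1))) by (field; lra).
    apply exp_ineq1. intros H.
    assert (y / (y + 1) = 0) by lra.
    assert (0 < y / (y + 1)) by (apply Rdiv_lt_0_compat; lra). lra. }
  apply ln_increasing in lt_exp; [| apply Rinv_0_lt_compat; lra].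
  rewrite ln_exp, ln_Rinv in lt_exp by lra. lra.
Qed.

Definition Ei_integrand (t : R) : R := exp (- t) / t.

Definition Ei_partial (mu s : R) : R := RInt Ei_integrand mu s.

Lemma continuous_Ei_integrand t : 0 < t -> continuous Ei_integrand t.
Proof.
  intros Ht. apply (@ex_derive_continuous R_AbsRing R_NormedModule).
  unfold Ei_integrand. auto_derive. lra.
Qed.

Lemma ex_RInt_Ei_integrand a b : 0 < a -> 0 < b -> ex_RInt Ei_integrand a b.
Proof.
  intros Ha Hb. apply (@ex_RInt_continuous R_CompleteNormedModule).
  intros t [Ht _]. apply continuous_Ei_integrand.
  apply Rlt_le_trans with (2 := Ht). apply Rmin_case; auto.
Qed.

Lemma is_derive_Ei_partial mu s :
  0 < mu -> 0 < s -> is_derive (Ei_partial mu) s (Ei_integrand s).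
Proof.
  intros Hmu Hs. apply (@is_derive_RInt R_NormedModule _ _ mu).
  - exists (mkposreal (s / 2) ltac:(lra)). intros b Hb.
    apply (@RInt_correct R_CompleteNormedModule), ex_RInt_Ei_integrand; auto.
    change (Rabs (b - s) < s / 2) in Hb. apply Rabs_def2 in Hb. lra.
  - apply continuous_Ei_integrand; auto.
Qed.

Lemma Ei_partial_incr mu x y :
  0 < mu -> mu <= x -> x <= y -> Ei_partial mu x <= Ei_partial mu y.
Proof.
  intros Hmu Hx Hy. unfold Ei_partial.
  rewrite <- (@RInt_Chasles R_CompleteNormedModule _ mu x y)
    by (apply ex_RInt_Ei_integrand; lra).
  assert (0 <= RInt Ei_integrand x y); [| change plus with Rplus; simpl; lra].
  apply RInt_ge_0; [auto | apply ex_RInt_Ei_integrand; lra |].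
  intros t Ht. unfold Ei_integrand.
  apply Rdiv_le_0_compat; [left; apply exp_pos | lra].
Qed.

Lemma Ei_partial_le mu x : 0 < mu -> mu <= x -> Ei_partial mu x <= exp (- mu) / mu.
Proof.
  intros Hmu Hx.
  assert (int_bound : is_RInt (fun t => exp (- t) / mu) mu x
                        ((- exp (- x) / mu) - (- exp (- mu) / mu))).
  { apply (@is_RInt_derive R_CompleteNormedModule (fun t => - exp (- t) / mu)).
    - intros t _. auto_derive; auto. field. lra.
    - intros t _. apply (@ex_derive_continuous R_AbsRing R_NormedModule).
      auto_derive. lra. }
  apply Rle_trans with ((- exp (- x) / mu) - (- exp (- mu) / mu)).
  - apply (is_RInt_le Ei_integrand (fun t => exp (- t) / mu) mu x); auto.
    + apply (@RInt_correct R_CompleteNormedModule), ex_RInt_Ei_integrand; lra.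
    + intros t Ht. unfold Ei_integrand, Rdiv. apply Rmult_le_compat_l.
      * left; apply exp_pos.
      * apply Rinv_le_contravar; lra.
  - assert (0 < exp (- x) / mu) by (apply Rdiv_lt_0_compat; [apply exp_pos | lra]).
    unfold Rdiv in *. lra.
Qed.

Lemma is_lim_Ei_partial mu : 0 < mu -> is_lim (Ei_partial mu) p_infty (- Ei (- mu)).
Proof.
  intros Hmu.
  destruct (is_lim_incr_bounded (Ei_partial mu) mu (exp (- mu) / mu)) as [l Hl].
  - intros x y Hx Hxy. apply Ei_partial_incr; lra.
  - intros x Hx. apply Ei_partial_le; lra.
  - replace (- Ei (- mu)) with l; auto.
    unfold Ei. rewrite !Ropp_involutive. symmetry.
    apply (@is_RInt_gen_unique R_CompleteNormedModule);
      [apply Proper_StrongProper, at_point_filter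
      | apply Proper_StrongProper, Rbar_locally_filter |].
    apply (is_RInt_gen_p_infty_of_lim _ (Ei_partial mu)); auto.
    intros b Hb. apply (@RInt_correct R_CompleteNormedModule), ex_RInt_Ei_integrand; lra.
Qed.

Section Expectation.

Variables lam P : R.
Hypothesis lam_pos : 0 < lam.
Hypothesis P_pos : 0 < P.

Let mu := lam / P.
Let c := (1 + mu) * exp mu.

Let mu_pos : 0 < mu.
Proof. apply Rdiv_lt_0_compat; auto. Qed.

Definition kl_gap (x : R) : R := ln (x * P + 1) - x * P / (x * P + 1).

Definition kl_integrand (x : R) : R := kl_gap x * (lam * exp (- lam * x)).

Definition kl_primitive (x : R) : R :=
  exp (- lam * x) * (/ (x * P + 1) - kl_gap x) + c * Ei_partial mu (mu + lam * x).

Lemma is_derive_kl_primitive x : 0 <= x -> is_derive kl_primitive x (kl_integrand x).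
Proof.
  intros Hx.
  assert (0 < x * P + 1) by nra.
  assert (Hs : 0 < mu + lam * x) by (generalize mu_pos; nra).
  assert (exp_shift : exp (- (mu + lam * x)) = / exp mu * exp (- lam * x)).
  { rewrite <- exp_Ropp, <- exp_plus. f_equal. ring. }
  assert (head : is_derive (fun y => exp (- lam * y) * (/ (y * P + 1) - kl_gap y)) x
                   (kl_integrand x - (lam + P) * exp (- lam * x) / (x * P + 1))).
  { unfold kl_integrand, kl_gap. auto_derive; [lra |]. field. lra. }
  assert (tail : is_derive (fun y => Ei_partial mu (mu + lam * y)) x
                   (lam * Ei_integrand (mu + lam * x))).
  { apply (is_derive_comp (Ei_partial mu) (fun y => mu + lam * y)).
    - apply is_derive_Ei_partial; auto.
    - auto_derive; auto. ring. }
  assert (tail_val : c * (lam * Ei_integrand (mu + lam * x))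
                     = (lam + P) * exp (- lam * x) / (x * P + 1)).
  { unfold Ei_integrand, c. rewrite exp_shift. unfold mu.
    assert (0 < exp (lam / P)) by apply exp_pos.
    field. repeat split; try lra. nra. }
  replace (kl_integrand x)
    with (plus (kl_integrand x - (lam + P) * exp (- lam * x) / (x * P + 1))
               (scal c (lam * Ei_integrand (mu + lam * x))))
    by (change plus with Rplus; change scal with Rmult; simpl; lra).
  exact (is_derive_plus _ _ _ _ _ head (is_derive_scal _ _ c _ tail)).
Qed.

Lemma continuous_kl_integrand x : 0 <= x -> continuous kl_integrand x.
Proof.
  intros Hx. assert (0 < x * P + 1) by nra.
  apply (@ex_derive_continuous R_AbsRing R_NormedModule).
  unfold kl_integrand, kl_gap. auto_derive. lra.
Qed.

Lemma is_RInt_kl_integrand a b :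
  0 <= a -> a <= b -> is_RInt kl_integrand a b (kl_primitive b - kl_primitive a).
Proof.
  intros Ha Hab. apply (@is_RInt_derive R_CompleteNormedModule).
  - intros x Hx. rewrite Rmin_left in Hx by lra. apply is_derive_kl_primitive. lra.
  - intros x Hx. rewrite Rmin_left in Hx by lra. apply continuous_kl_integrand. lra.
Qed.

Lemma kl_integrand_pos x : 0 < x -> 0 < kl_integrand x.
Proof.
  intros Hx. unfold kl_integrand, kl_gap.
  assert (H := div_add1_lt_ln_add1 (x * P) ltac:(nra)).
  apply Rmult_lt_0_compat; [lra |].
  apply Rmult_lt_0_compat; [lra | apply exp_pos].
Qed.

Lemma kl_primitive_0 : kl_primitive 0 = 1.
Proof.
  unfold kl_primitive, kl_gap, Ei_partial.
  replace (mu + lam * 0) with mu by ring.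
  rewrite (@RInt_point R_CompleteNormedModule).
  replace (- lam * 0) with 0 by ring. replace (0 * P + 1) with 1 by ring.
  rewrite ln_1, exp_0. change zero with 0. field.
Qed.

Lemma is_lim_kl_primitive_head :
  is_lim (fun x => exp (- lam * x) * (/ (x * P + 1) - kl_gap x)) p_infty 0.
Proof.
  set (bound x := 2 * exp (- lam * x) + P * (x * exp (- lam * x))).
  assert (bound_lim : is_lim bound p_infty 0).
  { replace (Finite 0) with (Finite (2 * 0 + P * 0)) by (f_equal; ring).
    apply is_lim_plus'; apply (is_lim_scal_l _ _ _ 0).
    - apply is_lim_exp_opp_mul; auto.
    - apply is_lim_id_mul_exp_opp_mul; auto. }
  apply (is_lim_le_le_loc (fun x => - bound x) bound).
  - exists 0. intros x Hx.
    assert (0 < x * P + 1) by nra.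
    assert (0 <= ln (x * P + 1) <= x * P).
    { split; [rewrite <- ln_1; apply ln_le; nra | apply ln_add1_le; nra]. }
    assert (0 <= x * P / (x * P + 1) <= 1).
    { split; [apply Rdiv_le_0_compat; nra |].
      apply Rmult_le_reg_r with (x * P + 1); auto. field_simplify; lra. }
    assert (0 < / (x * P + 1) <= 1).
    { split; [apply Rinv_0_lt_compat; auto |].
      rewrite <- Rinv_1. apply Rinv_le_contravar; nra. }
    assert (0 < exp (- lam * x)) by apply exp_pos.
    unfold bound, kl_gap. split; nra.
  - replace (Finite 0) with (Rbar_opp 0) by (simpl; f_equal; ring).
    apply is_lim_opp; auto.
  - exact bound_lim.
Qed.

Lemma is_lim_kl_primitive_sub0 :
  is_lim (fun b => kl_primitive b - kl_primitive 0) p_infty (fKL lam P).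
Proof.
  replace (fKL lam P) with (0 + c * - Ei (- mu) + -1) by (unfold fKL, c, mu; ring).
  apply (is_lim_ext (fun b => exp (- lam * b) * (/ (b * P + 1) - kl_gap b)
                              + c * Ei_partial mu (mu + lam * b) + -1)).
  { intros b. rewrite kl_primitive_0. unfold kl_primitive. ring. }
  apply is_lim_plus'; [apply is_lim_plus' | apply is_lim_const].
  - exact is_lim_kl_primitive_head.
  - apply (is_lim_scal_l _ c _ (- Ei (- mu))).
    apply (is_lim_comp (Ei_partial mu) (fun x => mu + lam * x) p_infty _ p_infty).
    + apply is_lim_Ei_partial, mu_pos.
    + apply is_lim_affine_p_infty; auto.
    + exists 0; intros; discriminate.
Qed.

Lemma kl_primitive_incr a b : 0 <= a -> a <= b -> kl_primitive a <= kl_primitive b.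
Proof.
  intros Ha Hab.
  assert (0 <= kl_primitive b - kl_primitive a); [| lra].
  apply (is_RInt_ge_0 kl_integrand a b); [lra | apply is_RInt_kl_integrand; auto |].
  intros x Hx. left. apply kl_integrand_pos. lra.
Qed.

Lemma kl_primitive_0_lt_1 : kl_primitive 0 < kl_primitive 1.
Proof.
  assert (int01 := is_RInt_unique _ _ _ _ (is_RInt_kl_integrand 0 1 ltac:(lra) ltac:(lra))).
  assert (0 < RInt kl_integrand 0 1); [| lra].
  apply RInt_gt_0; [lra | |].
  - intros x Hx. apply kl_integrand_pos. lra.
  - intros x Hx. apply continuous_kl_integrand. lra.
Qed.

End Expectation.

Lemma is_RInt_gen_kl_integrand lam P :
  0 < lam -> 0 < P ->
  is_RInt_gen (kl_integrand lam P) (at_point 0) (Rbar_locally p_infty) (fKL lam P).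
Proof.
  intros Hlam HP.
  apply (is_RInt_gen_p_infty_of_lim _ (fun b => kl_primitive lam P b - kl_primitive lam P 0)).
  - intros b Hb. apply is_RInt_kl_integrand; auto; lra.
  - apply is_lim_kl_primitive_sub0; auto.
Qed.

Lemma fKL_pos lam P : 0 < lam -> 0 < P -> 0 < fKL lam P.
Proof.
  intros Hlam HP.
  assert (H01 := kl_primitive_0_lt_1 lam P Hlam HP).
  assert (fKL_ge : Rbar_le (kl_primitive lam P 1 - kl_primitive lam P 0) (fKL lam P)).
  { apply (is_lim_le_loc (fun _ => kl_primitive lam P 1 - kl_primitive lam P 0)
                         (fun b => kl_primitive lam P b - kl_primitive lam P 0) p_infty).
    - exists 1. intros b Hb. assert (kl_primitive lam P 1 <= kl_primitive lam P b); [| lra].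
      apply kl_primitive_incr; auto; lra.
    - apply is_lim_const.
    - apply is_lim_kl_primitive_sub0; auto. }
  simpl in fKL_ge. lra.
Qed.

Lemma mul_sub_le_Rmax0 s t a k :
  0 < s -> s <= t -> 0 <= a -> s * (s * a - k) <= Rmax 0 (t * (t * a - k)).
Proof.
  intros Hs Hst Ha. destruct (Rle_lt_dec (s * a) k) as [Hneg | Hpos].
  - apply Rle_trans with 0; [nra | apply Rmax_l].
  - apply Rle_trans with (t * (t * a - k)); [| apply Rmax_r].
    assert (0 <= (t - s) * (a * (t + s) - k)) by (apply Rmult_le_pos; nra).
    nra.
Qed.

Lemma mul_rate_sqrt h2 q L Pa :
  0 < L ->
  L * rate h2 q L Pa
  = sqrt L * (sqrt L * log2 (1 + Pa * h2)
              - sqrt (1 - / (1 + Pa * h2) ^ 2) * q / ln 2).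
Proof.
  intros HL. unfold rate.
  rewrite sqrt_mult_alt, sqrt_inv by (left; apply Rinv_0_lt_compat; auto).
  assert (0 < sqrt L) by (apply sqrt_lt_R0; auto).
  assert (0 < ln 2) by (rewrite <- ln_1; apply ln_increasing; lra).
  rewrite <- (sqrt_sqrt L) at 1 by lra.
  field. lra.
Qed.

Lemma objective_le_Rmax0 h2 q delta L L' Pa :
  0 <= Pa * h2 -> delta < 1 -> 0 < L -> L <= L' ->
  objective h2 q delta L Pa <= Rmax 0 (objective h2 q delta L' Pa).
Proof.
  intros Hh Hdelta HL HLL'. unfold objective.
  rewrite !mul_rate_sqrt by lra.
  rewrite <- (Rmult_0_l (1 - delta)), <- Rmax_mult by lra.
  apply Rmult_le_compat_r; [lra |].
  apply mul_sub_le_Rmax0.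
  - apply sqrt_lt_R0; auto.
  - apply sqrt_le_1_alt; auto.
  - unfold log2. apply Rdiv_le_0_compat.
    + rewrite <- ln_1. apply ln_le; lra.
    + rewrite <- ln_1. apply ln_increasing; lra.
Qed.

Lemma feasible_le_L1opt lam eps Lmax L1 Pa :
  0 < fKL lam Pa -> feasible lam eps Lmax L1 Pa -> L1 <= L1opt lam eps Lmax Pa.
Proof.
  intros Hf (_ & _ & Hcons & HLmax). unfold L1opt. apply Rmin_glb; auto.
  apply Rmult_le_reg_r with (fKL lam Pa); auto.
  unfold Rdiv. rewrite Rmult_assoc, Rinv_l by lra. lra.
Qed.

Lemma feasible_L1opt lam eps Lmax Pa :
  0 < eps -> 0 < Lmax -> 0 < Pa -> 0 < fKL lam Pa ->
  feasible lam eps Lmax (L1opt lam eps Lmax Pa) Pa.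
Proof.
  intros Heps HLmax HPa Hf. unfold feasible, L1opt.
  repeat split; auto.
  - apply Rmin_case; auto. apply Rdiv_lt_0_compat; nra.
  - apply Rle_trans with (2 * eps ^ 2 / fKL lam Pa * fKL lam Pa).
    + apply Rmult_le_compat_r; [lra | apply Rmin_r].
    + right. field. lra.
  - apply Rmin_l.
Qed.

Theorem corollary1 (lam eps Lmax delta h2 q : R) :
  0 < lam -> 0 < eps -> 0 < Lmax -> 0 < delta < / 2 -> 0 < h2 ->
  Qfun q = delta ->
  (* the expectation identity: E[ln(X Pa + 1) - X Pa/(X Pa + 1)] = f(Pa),
     X exponential with mean 1/lam (density lam e^{-lam x} on [0,oo)) *)
  (forall Pa, 0 < Pa ->
     is_RInt_gen
       (fun x => (ln (x * Pa + 1) - x * Pa / (x * Pa + 1)) * (lam * exp (- lam * x)))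
       (at_point 0) (Rbar_locally p_infty) (fKL lam Pa))
  /\
  (* for a given Pa, L1^* is optimal *)
  (forall Pa, 0 < Pa ->
     0 <= rate h2 q (L1opt lam eps Lmax Pa) Pa ->
     feasible lam eps Lmax (L1opt lam eps Lmax Pa) Pa /\
     forall L1, feasible lam eps Lmax L1 Pa ->
       objective h2 q delta L1 Pa
       <= objective h2 q delta (L1opt lam eps Lmax Pa) Pa)
  /\
  (* a maximizer Pa* of Pa |-> objective(L1^*(Pa), Pa) gives a joint optimum *)
  (forall Pstar, 0 < Pstar ->
     0 <= rate h2 q (L1opt lam eps Lmax Pstar) Pstar ->
     (forall Pa, 0 < Pa ->
        objective h2 q delta (L1opt lam eps Lmax Pa) Pa
        <= objective h2 q delta (L1opt lam eps Lmax Pstar) Pstar) ->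
     forall L1 Pa, feasible lam eps Lmax L1 Pa ->
       objective h2 q delta L1 Pa
       <= objective h2 q delta (L1opt lam eps Lmax Pstar) Pstar).
Proof.
  intros Hlam Heps HLmax Hdelta Hh2 _.
  assert (L1opt_best : forall L1 Pa, feasible lam eps Lmax L1 Pa ->
            objective h2 q delta L1 Pa
            <= Rmax 0 (objective h2 q delta (L1opt lam eps Lmax Pa) Pa)).
  { intros L1 Pa HF. pose proof HF as (HL1 & HPa & _).
    apply objective_le_Rmax0; auto; [nra | lra |].
    apply feasible_le_L1opt; auto. apply fKL_pos; auto. }
  assert (L1opt_objective_nonneg : forall Pa, 0 < Pa ->
            0 <= rate h2 q (L1opt lam eps Lmax Pa) Pa ->
            0 <= objective h2 q delta (L1opt lam eps Lmax Pa) Pa).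
  { intros Pa HPa Hrate.
    destruct (feasible_L1opt lam eps Lmax Pa Heps HLmax HPa (fKL_pos lam Pa Hlam HPa)) as [HL1 _].
    unfold objective. apply Rmult_le_pos; [apply Rmult_le_pos |]; lra. }
  split; [| split].
  - intros Pa HPa. exact (is_RInt_gen_kl_integrand lam Pa Hlam HPa).
  - intros Pa HPa Hrate.
    split; [apply feasible_L1opt, fKL_pos; auto |].
    intros L1 HF.
    rewrite <- (Rmax_right 0 _ (L1opt_objective_nonneg Pa HPa Hrate)).
    apply L1opt_best; auto.
  - intros Pstar HPstar Hrate Pstar_max L1 Pa HF.
    apply Rle_trans with (1 := L1opt_best L1 Pa HF), Rmax_lub.
    + apply L1opt_objective_nonneg; auto.
    + apply Pstar_max. destruct HF as (_ & HPa & _). exact HPa.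
Qed.
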